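(* Let $\mathcal{X}$ be the class of finite groups $G$ in which independence and strong independence coincide, i.e. in which a finite subset $A\subseteq G$ is independent if and only if it is strongly independent. Then $\mathcal{X}$ is closed under taking subgroups, and every group in $\mathcal{X}$ is an EPPO group.
   Context: A subset $A$ of a group $G$ is \emph{independent} if $a\notin\langle A\setminus\{a\}\rangle$ for every $a\in A$. A finite subset $A$ is \emph{strongly independent} if no subgroup of $G$ containing $A$ can be generated by fewer than $|A|$ elements. An \emph{EPPO group} is a group in which every element has prime power order. *)

From mathcomp Require Import all_boot all_fingroup.
Set Implicit Arguments. Unset Strict Implicit. Unset Printing Implicit Defensive.
Local Open Scope group_scope.

Definition independent (gT : finGroupType) (A : {set gT}) : Prop :=
  forall a, a \in A -> a \notin <<A :\ a>>.

Definition strongly_independent (gT : finGroupType) (G : {group gT})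
    (A : {set gT}) : Prop :=
  forall (H : {group gT}), H \subset G -> A \subset H ->
  forall B : {set gT}, <<B>> = H -> #|A| <= #|B|.

Definition classX (gT : finGroupType) (G : {group gT}) : Prop :=
  forall A : {set gT}, A \subset G ->
    (independent A <-> strongly_independent G A).

(* EPPO: every element has prime power order (order 1 = p^0 included). *)
Definition EPPO (gT : finGroupType) (G : {group gT}) : Prop :=
  forall x, x \in G -> exists p k, prime p /\ #[x] = (p ^ k)%N.

(* Strong independence always implies independence, since an [a] lying in
   [<<A :\ a>>] would make [A :\ a] a smaller generating set of a subgroup
   containing [A]; and strong independence passes to subgroups, which gives
   the closure under subgroups.  If [x] does not have prime power order, its
   [p]- and [p']-constituents for a prime [p] dividing [#[x]] are nontrivial
   elements of coprime orders, hence an independent pair; but they lie in the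
   cyclic group [<[x]>], so they are not strongly independent. *)

From mathcomp Require Import all_boot all_fingroup.
From mathcomp Require Import pgroup cyclic.

Set Implicit Arguments.
Unset Strict Implicit.
Unset Printing Implicit Defensive.
Local Open Scope group_scope.

Section Independence.

Variable gT : finGroupType.
Implicit Types (G H : {group gT}) (A : {set gT}) (x y z : gT).

Lemma strongly_independentS G H A :
  H \subset G -> strongly_independent G A -> strongly_independent H A.
Proof.
by move=> sHG sindA K sKH sAK; apply: sindA sAK; apply: subset_trans sHG.
Qed.

Lemma strongly_independent_independent G A :
  A \subset G -> strongly_independent G A -> independent A.
Proof.
move=> sAG sindA a Aa; apply/negP => genAa.
have sAgen : A \subset <<A :\ a>>.
  apply/subsetP => b Ab; have [-> // | nba] := eqVneq b a.
  by apply: mem_gen; rewrite !inE nba.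
have sgenG : <<A :\ a>> \subset G by rewrite gen_subG subDset subsetU ?sAG ?orbT.
have := sindA _ sgenG sAgen (A :\ a) erefl.
by rewrite (cardsD1 a A) Aa ltnn.
Qed.

Lemma strongly_independent_cycle G A x :
  x \in G -> A \subset <[x]> -> strongly_independent G A -> #|A| <= 1.
Proof.
move=> Gx sAx sindA.
by rewrite -(cards1 x); apply: (sindA <[x]>%G) => //; rewrite cycle_subG.
Qed.

Lemma coprime_order_cycle1 y z : y \in <[z]> -> coprime #[y] #[z] -> y = 1.
Proof.
move=> zy co_yz; apply/eqP; rewrite -order_eq1 -{1}(gcdnn #[y]).
exact: coprime_dvdr (order_dvdG zy) co_yz.
Qed.

Lemma coprime_order_neq y z : y != 1 -> coprime #[y] #[z] -> y != z.
Proof.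
move=> ny1 co_yz; apply: contraNneq ny1 => eq_yz.
by rewrite (coprime_order_cycle1 _ co_yz) // eq_yz cycle_id.
Qed.

Lemma independent_coprime_pair y z :
  y != 1 -> z != 1 -> coprime #[y] #[z] -> independent [set y; z].
Proof.
move=> ny1 nz1 co_yz.
have co_zy : coprime #[z] #[y] by rewrite coprime_sym.
have nyz := coprime_order_neq ny1 co_yz.
move=> a; rewrite !inE => /orP[] /eqP ->.
  rewrite setU1K ?inE //; apply: contra ny1 => zy.
  by rewrite (coprime_order_cycle1 zy co_yz).
rewrite setUC setU1K ?inE 1?eq_sym //; apply: contra nz1 => yz.
by rewrite (coprime_order_cycle1 yz co_zy).
Qed.

Lemma prime_power_order_or_constt x :
  (exists p k, prime p /\ #[x] = (p ^ k)%N) \/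
  (exists p, x.`_p != 1 /\ x.`_p^' != 1).
Proof.
have [x_le1 | x_gt1] := leqP #[x] 1.
  by left; exists 2%N, 0%N; split=> //; apply/eqP; rewrite eqn_leq x_le1 order_gt0.
set p := pdiv #[x].
have [px | npx] := boolP (p.-elt x).
  by left; have [k ->] := p_natP px; exists p, k; rewrite pdiv_prime.
right; exists p; split.
  apply/eqP => /constt1P p'x.
  have := pnatPpi p'x (p := p); rewrite /p pi_pdiv x_gt1 => /(_ isT).
  by rewrite !inE eqxx.
by apply/eqP => /constt1P; rewrite /p_elt pnatNK; apply/negP.
Qed.

End Independence.

Lemma classX_subgroup (gT : finGroupType) (G H : {group gT}) :
  classX G -> H \subset G -> classX H.
Proof.
move=> XG sHG A sAH; split=> [indA | ].
  exact: strongly_independentS sHG ((XG A (subset_trans sAH sHG)).1 indA).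
exact: strongly_independent_independent.
Qed.

Lemma classX_EPPO (gT : finGroupType) (G : {group gT}) : classX G -> EPPO G.
Proof.
move=> XG x Gx; have [// | [p [nxp1 nxp'1]]] := prime_power_order_or_constt x.
have co_constt : coprime #[x.`_p] #[x.`_p^'] by rewrite !order_constt coprime_partC.
have sAx : [set x.`_p; x.`_p^'] \subset <[x]>.
  by apply/subsetP => w; rewrite !inE => /orP[] /eqP ->; apply: cycle_constt.
have sAG : [set x.`_p; x.`_p^'] \subset G by rewrite (subset_trans sAx) ?cycle_subG.
have := (XG _ sAG).1 (independent_coprime_pair nxp1 nxp'1 co_constt).
move/(strongly_independent_cycle Gx sAx).
by rewrite cards2 (coprime_order_neq nxp1 co_constt).
Qed.

Theorem mainTheorem3 :
  (forall (gT : finGroupType) (G H : {group gT}),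
     classX G -> H \subset G -> classX H) /\
  (forall (gT : finGroupType) (G : {group gT}), classX G -> EPPO G).
Proof. by split; [exact: classX_subgroup | exact: classX_EPPO]. Qed.
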